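(* Let $(A,* )$ be an involutive associative algebra, $(M,* )$ an involutive $A$-bimodule, and $T:M\to A$ a relative Rota-Baxter operator on $A$ with respect to $M$. If $iH^2_T(M,A)=0$, then every finite order deformation of $T$ extends to a deformation of next order.
   Context: An involutive associative algebra is an associative algebra $A$ with a linear map $*:A\to A$ satisfying $a^{**}=a$ and $(ab)^*=b^*a^*$; an involutive $A$-bimodule is an $A$-bimodule $M$ with $*:M\to M$, $u^{**}=u$, $(au)^*=u^*a^*$, $(ua)^*=a^*u^*$. A relative Rota-Baxter operator is a linear $T:M\to A$ with $T(u^* )=T(u)^*$ and $T(u)T(v)=T(uT(v)+T(u)v)$. Notation: $u\circledast v=uT(v)+T(u)v$, $l_T(u,a)=T(u)a-T(ua)$, $r_T(a,u)=aT(u)-T(au)$. Let $i\mathrm{Hom}(M^{\otimes0},A)=\{a\in A\mid a^*=-a\}$ and for $n\ge1$ $i\mathrm{Hom}(M^{\otimes n},A)=\{f\mid f(u_1,\ldots,u_n)^*=(-1)^{\frac{(n-1)(n-2)}{2}}f(u_n^*,\ldots,u_1^* )\}$. Differential: $d_T(a)(u)=l_T(u,a)-r_T(a,u)$, and for $n\ge1$, $(d_Tf)(u_1,\ldots,u_{n+1})=(-1)^n\big[l_T(u_1,f(u_2,\ldots,u_{n+1}))+\sum_{i=1}^n(-1)^if(u_1,\ldots,u_i\circledast u_{i+1},\ldots,u_{n+1})+(-1)^{n+1}r_T(f(u_1,\ldots,u_n),u_{n+1})\big]$; $iH^\bullet_T(M,A)$ is the cohomology of $(i\mathrm{Hom}(M^{\otimes\bullet},A),d_T)$.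 An order $N$ deformation of $T$ is $T_t=\sum_{i=0}^Nt^iT_i$ with $T_0=T$ such that $T_k(u^* )=T_k(u)^*$ and $\sum_{i+j=k}T_i(u)T_j(v)=\sum_{i+j=k}T_i(uT_j(v)+T_j(u)v)$ for $k=0,\ldots,N$. It extends to next order if there is $T_{N+1}\in i\mathrm{Hom}(M,A)$ making $T_t+t^{N+1}T_{N+1}$ an order $N+1$ deformation. *)

From HB Require Import structures.
From mathcomp Require Import all_boot all_algebra.
Set Implicit Arguments. Unset Strict Implicit. Unset Printing Implicit Defensive.
Import GRing.Theory.
Local Open Scope ring_scope.

Definition islinear (K : fieldType) (V W : lmodType K) (f : V -> W) :=
  forall (k : K) (x y : V), f (k *: x + y) = k *: f x + f y.

Section InvolutiveRB.
Variable K : fieldType.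
Variables A M : lmodType K.
(* the (not necessarily unital) associative multiplication of A and involution of A *)
Variable mul : A -> A -> A.
Variable sA : A -> A.
Variable la : A -> M -> M.
Variable ra : M -> A -> M.
Variable sM : M -> M.

Definition inv_assoc_algebra : Prop :=
  (forall a, islinear (mul a)) /\ (forall b, islinear (fun a => mul a b)) /\
  (forall a b c, mul (mul a b) c = mul a (mul b c)) /\
  islinear sA /\ (forall a, sA (sA a) = a) /\
  (forall a b, sA (mul a b) = mul (sA b) (sA a)).

Definition inv_bimodule : Prop :=
  (forall a, islinear (la a)) /\ (forall u, islinear (fun a => la a u)) /\
  (forall u, islinear (ra u)) /\ (forall a, islinear (fun u => ra u a)) /\
  (forall a b u, la (mul a b) u = la a (la b u)) /\
  (forall a b u, ra u (mul a b) = ra (ra u a) b) /\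
  (forall a b u, ra (la a u) b = la a (ra u b)) /\
  islinear sM /\ (forall u, sM (sM u) = u) /\
  (forall a u, sM (la a u) = ra (sM u) (sA a)) /\
  (forall a u, sM (ra u a) = la (sA a) (sM u)).

Definition circ (S : M -> A) (u v : M) : M := ra u (S v) + la (S u) v.

Definition rel_RB (T : M -> A) : Prop :=
  islinear T /\ (forall u, T (sM u) = sA (T u)) /\
  (forall u v, mul (T u) (T v) = T (circ T u v)).

Section Cochains.
Variable T : M -> A.
Definition lT (u : M) (a : A) : A := mul (T u) a - T (ra u a).
Definition rT (a : A) (u : M) : A := mul a (T u) - T (la a u).

Definition iHom1 (f : M -> A) : Prop :=
  islinear f /\ forall u, sA (f u) = f (sM u).
(* iHom(M^2,A): f(u1,u2) star = f(u2 star, u1 star), sign (-1)^0 = 1 *)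
Definition iHom2 (f : M -> M -> A) : Prop :=
  (forall u, islinear (f u)) /\ (forall v, islinear (fun u => f u v)) /\
  (forall u v, sA (f u v) = f (sM v) (sM u)).

Definition dT1 (f : M -> A) (u1 u2 : M) : A :=
  - (lT u1 (f u2) - f (circ T u1 u2) + rT (f u1) u2).
Definition dT2 (f : M -> M -> A) (u1 u2 u3 : M) : A :=
  lT u1 (f u2 u3) - f (circ T u1 u2) u3 + f u1 (circ T u2 u3) - rT (f u1 u2) u3.

Definition iH2_trivial : Prop :=
  forall f : M -> M -> A, iHom2 f ->
    (forall u1 u2 u3, dT2 f u1 u2 u3 = 0) ->
    exists g : M -> A, iHom1 g /\ forall u1 u2, f u1 u2 = dT1 g u1 u2.

(* T_t = sum_(i<=N) t^i (Ts i) is an order N deformation of T *)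
Definition is_deformation (N : nat) (Ts : nat -> M -> A) : Prop :=
  Ts 0%N = T /\
  (forall i, (i <= N)%N -> islinear (Ts i) /\ forall u, Ts i (sM u) = sA (Ts i u)) /\
  (forall k, (k <= N)%N -> forall u v,
     \sum_(i < k.+1) mul (Ts i u) (Ts (k - i)%N v)
     = \sum_(i < k.+1) Ts i (circ (Ts (k - i)%N) u v)).
End Cochains.
End InvolutiveRB.

From HB Require Import structures.
From mathcomp Require Import all_boot all_algebra zify.
Set Implicit Arguments. Unset Strict Implicit. Unset Printing Implicit Defensive.
Import GRing.Theory.
Local Open Scope ring_scope.

(* Write T_t = \sum_i t^i T_i.  The equation of order N+1 for T_t + t^(N+1) g
   says exactly that d_T g equals the obstruction
     Ob(u, v) = \sum_(i + j = N+1, i, j >= 1) (T_i u T_j v - T_i (u T_j v + T_j u v)),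
   so it suffices that Ob be a 2-cocycle in iHom(M^{(x)2}, A).  Ob is involutive
   because the involutions reverse products.  It is closed because of the
   Bianchi-type identity d_S(Omega_S) = 0, where
   Omega_S(u, v) = S u S v - S (u S v + S u v), valid for every linear S: for S
   the truncation of T_t at order N, the t^(N+1) coefficient of this identity is
   d_T Ob plus terms d_(T_a)(Omega_k) with k <= N, which vanish since T_t is a
   deformation of order N. *)

Lemma add0r_eq0 (V : zmodType) (x : V) : 0 + x = 0 -> x = 0.
Proof. by rewrite add0r. Qed.

(* Closes [e = 0] when, once opposites are pushed inward, the summands of [e]
   cancel in pairs. *)
Ltac cancel_pairs_loop :=
  lazymatch goal with
  | |- 0 = 0 => reflexivity
  | |- _ + (- ?t) = 0 => rewrite ?(addrAC _ t) subrK; cancel_pairs_loop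
  | |- _ + ?t = 0 => rewrite ?(addrAC _ (- t)) addrK; cancel_pairs_loop
  end.
Ltac cancel_pairs :=
  rewrite ?opprD ?opprK; apply: add0r_eq0; rewrite ?addrA; cancel_pairs_loop.
Ltac eq_by_cancel := apply/eqP; rewrite -subr_eq0; apply/eqP; cancel_pairs.

Section LinearMaps.
Variables (K : fieldType) (U V W : lmodType K).

Section OneMap.
Variables (f : V -> W) (f_lin : islinear f).

Lemma linD x y : f (x + y) = f x + f y.
Proof. by rewrite -[x]scale1r f_lin !scale1r. Qed.

Lemma lin0 : f 0 = 0.
Proof. by apply: (@addrI _ (f 0)); rewrite -linD !addr0. Qed.

Lemma linN x : f (- x) = - f x.
Proof. by apply/eqP; rewrite -addr_eq0 -linD addNr lin0. Qed.

Lemma lin_sum (I : Type) (r : seq I) (P : pred I) (F : I -> V) :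
  f (\sum_(i <- r | P i) F i) = \sum_(i <- r | P i) f (F i).
Proof. exact: (big_morph f linD lin0). Qed.

End OneMap.

Lemma islinear_comp (f : V -> W) (g : U -> V) :
  islinear f -> islinear g -> islinear (fun x => f (g x)).
Proof. by move=> f_lin g_lin k x y; rewrite g_lin f_lin. Qed.

Lemma islinear_add (f g : V -> W) :
  islinear f -> islinear g -> islinear (fun x => f x + g x).
Proof. by move=> f_lin g_lin k x y; rewrite f_lin g_lin scalerDr addrACA. Qed.

Lemma islinear_sub (f g : V -> W) :
  islinear f -> islinear g -> islinear (fun x => f x - g x).
Proof. by move=> f_lin g_lin k x y; rewrite f_lin g_lin scalerBr opprD addrACA. Qed.

Lemma islinear0 : islinear (fun _ : V => 0 : W).
Proof. by move=> k x y; rewrite scaler0 addr0. Qed.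

Lemma islinear_sum (n : nat) (F : 'I_n -> V -> W) :
  (forall i, islinear (F i)) -> islinear (fun x => \sum_(i < n) F i x).
Proof.
move=> F_lin k x y; rewrite scaler_sumr -big_split.
by apply: eq_bigr => i _; apply: F_lin.
Qed.

End LinearMaps.

Section TripleSums.
Variable V : zmodType.
Implicit Type F : nat -> nat -> nat -> V.

Definition sum3 n F : V :=
  \sum_(a < n.+1) \sum_(b < n.+1) \sum_(c < n.+1)
     (if (a + b + c == n)%N then F a b c else 0).

Lemma eq_sum3 n F G : (forall a b c, F a b c = G a b c) -> sum3 n F = sum3 n G.
Proof.
move=> FG; apply: eq_bigr => a _; apply: eq_bigr => b _; apply: eq_bigr => c _.
by rewrite FG.
Qed.

Lemma sum3D n F G : sum3 n (fun a b c => F a b c + G a b c) = sum3 n F + sum3 n G.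
Proof.
rewrite /sum3 -big_split; apply: eq_bigr => a _.
rewrite -big_split; apply: eq_bigr => b _.
rewrite -big_split; apply: eq_bigr => c _.
by case: ifP => /= _; rewrite ?addr0.
Qed.

Lemma sum3B n F G : sum3 n (fun a b c => F a b c - G a b c) = sum3 n F - sum3 n G.
Proof.
rewrite /sum3 -sumrB; apply: eq_bigr => a _.
rewrite -sumrB; apply: eq_bigr => b _.
rewrite -sumrB; apply: eq_bigr => c _.
by case: ifP; rewrite ?subr0.
Qed.

Lemma sum3_cycle n F : sum3 n (fun a b c => F c a b) = sum3 n F.
Proof.
rewrite /sum3; under eq_bigr do rewrite exchange_big.
rewrite exchange_big; apply: eq_bigr => c _; apply: eq_bigr => a _.
by apply: eq_bigr => b _; rewrite [(a + b + c)%N]addnC addnA.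
Qed.

Lemma sum3_swap12 n F : sum3 n (fun a b c => F b a c) = sum3 n F.
Proof.
rewrite /sum3 exchange_big; apply: eq_bigr => b _; apply: eq_bigr => a _.
by apply: eq_bigr => c _; rewrite [(a + b)%N]addnC.
Qed.

Lemma sum3_swap13 n F : sum3 n (fun a b c => F c b a) = sum3 n F.
Proof. by rewrite -sum3_cycle -(sum3_swap12 n F). Qed.

Lemma sum3_sub_cycle n F : sum3 n (fun a b c => F a b c - F c a b) = 0.
Proof. by rewrite (sum3B n F (fun a b c => F c a b)) (sum3_cycle n F) subrr. Qed.

Lemma sum3_sub_swap12 n F : sum3 n (fun a b c => F a b c - F b a c) = 0.
Proof. by rewrite (sum3B n F (fun a b c => F b a c)) (sum3_swap12 n F) subrr. Qed.

Lemma sum3_sub_swap13 n F : sum3 n (fun a b c => F a b c - F c b a) = 0.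
Proof. by rewrite (sum3B n F (fun a b c => F c b a)) (sum3_swap13 n F) subrr. Qed.

Lemma sum_ord_add_eq m n (G : nat -> V) :
  \sum_(c < n.+1 | (m + c == n)%N) G c = if (m <= n)%N then G (n - m)%N else 0.
Proof.
case: leqP => [le_mn | lt_nm]; last by rewrite big_pred0 // => c; lia.
have lt_n : (n - m < n.+1)%N by lia.
rewrite (big_pred1 (Ordinal lt_n)) // => c /=.
by apply/eqP/eqP => [eq_n | ->] /=; [apply: val_inj => /=|]; lia.
Qed.

Lemma sum3E n F :
  sum3 n F = \sum_(a < n.+1) \sum_(b < (n - a).+1) F a b (n - a - b)%N.
Proof.
apply: eq_bigr => a _.
rewrite (big_ord_widen n.+1 (fun b => F a b (n - a - b)%N)) ?ltnS ?leq_subr // [RHS]big_mkcond.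
apply: eq_bigr => b _.
by rewrite -big_mkcond sum_ord_add_eq ltnS leq_subRL ?subnDA // -ltnS.
Qed.

End TripleSums.

Section RotaBaxter.
Variables (K : fieldType) (A M : lmodType K) (mul : A -> A -> A) (sA : A -> A).
Variables (la : A -> M -> M) (ra : M -> A -> M) (sM : M -> M).
Hypothesis HA : inv_assoc_algebra mul sA.
Hypothesis HM : inv_bimodule mul sA la ra sM.

Lemma mul_linr a : islinear (mul a). Proof. by case: HA. Qed.
Lemma mul_linl b : islinear (mul^~ b). Proof. by case: HA => _ []. Qed.
Lemma mul_assoc a b c : mul (mul a b) c = mul a (mul b c).
Proof. by case: HA => _ [_ []]. Qed.
Lemma sA_lin : islinear sA. Proof. by case: HA => _ [_ [_ []]]. Qed.
Lemma sA_mul a b : sA (mul a b) = mul (sA b) (sA a).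
Proof. by case: HA => _ [_ [_ [_ []]]]. Qed.

Lemma la_linr a : islinear (la a). Proof. by case: HM. Qed.
Lemma la_linl u : islinear (la^~ u). Proof. by case: HM => _ []. Qed.
Lemma ra_linr u : islinear (ra u). Proof. by case: HM => _ [_ []]. Qed.
Lemma ra_linl a : islinear (ra^~ a). Proof. by case: HM => _ [_ [_ []]]. Qed.
Lemma la_mul a b u : la (mul a b) u = la a (la b u).
Proof. by case: HM => _ [_ [_ [_ []]]]. Qed.
Lemma ra_mul a b u : ra (ra u a) b = ra u (mul a b).
Proof. by case: HM => _ [_ [_ [_ [_ []]]]]. Qed.
Lemma ra_la a b u : ra (la a u) b = la a (ra u b).
Proof. by case: HM => _ [_ [_ [_ [_ [_ []]]]]]. Qed.
Lemma sM_lin : islinear sM. Proof. by case: HM => _ [_ [_ [_ [_ [_ [_ []]]]]]]. Qed.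
Lemma sM_la a u : sM (la a u) = ra (sM u) (sA a).
Proof. by case: HM => _ [_ [_ [_ [_ [_ [_ [_ [_ []]]]]]]]]. Qed.
Lemma sM_ra a u : sM (ra u a) = la (sA a) (sM u).
Proof. by case: HM => _ [_ [_ [_ [_ [_ [_ [_ [_ []]]]]]]]]. Qed.

Local Notation circ := (circ la ra).
Local Notation dT1 := (dT1 mul la ra).
Local Notation dT2 := (dT2 mul la ra).

Definition rb_defect (P Q : M -> A) (u v : M) : A := mul (P u) (Q v) - P (circ Q u v).

(* The t^k coefficient of S_t u S_t v - S_t (circ S_t u v), S_t = \sum_i t^i S i. *)
Definition obstruction (S : nat -> M -> A) (k : nat) (u v : M) : A :=
  \sum_(i < k.+1) rb_defect (S i) (S (k - i)%N) u v.

Section DefectCoboundary.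
Variables u1 u2 u3 : M.
Implicit Types P Q R : M -> A.

(* Summed over a + b + c = n with (P, Q, R) = (S a, S b, S c), each of the three
   differences in [dT2_rb_defect] cancels after permuting (a, b, c); this is
   what makes the obstruction a cocycle. *)
Definition cycle_part P Q R : A :=
  - mul (mul (Q u1) (R u2)) (P u3) + Q (la (R (circ P u1 u2)) u3)
  + rb_defect Q R u1 (circ P u2 u3).
Definition swap13_part P Q R : A := mul (Q (circ R u1 u2)) (P u3).
Definition swap12_part P Q R : A := Q (ra (circ P u1 u2) (R u3)).

Lemma dT2_rb_defect P Q R :
  islinear P -> islinear Q -> islinear R ->
  dT2 P (rb_defect Q R) u1 u2 u3 =
    cycle_part P Q R - cycle_part R P Q + (swap13_part P Q R - swap13_part R Q P)
    + (swap12_part P Q R - swap12_part Q P R).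
Proof.
move=> P_lin Q_lin R_lin.
rewrite /dT2 /lT /rT /cycle_part /swap13_part /swap12_part /rb_defect /circ.
rewrite ?(opprD, opprK, linD (mul_linr _), linN (mul_linr _), linD (mul_linl _),
  linN (mul_linl _), linD (la_linr _), linN (la_linr _), linD (la_linl _),
  linN (la_linl _), linD (ra_linr _), linN (ra_linr _), linD (ra_linl _),
  linN (ra_linl _), linD P_lin, linN P_lin, linD Q_lin, linN Q_lin, linD R_lin,
  linN R_lin, mul_assoc, la_mul, ra_mul, ra_la).
eq_by_cancel.
Qed.

End DefectCoboundary.

Lemma dT2_sum P (I : Type) (r : seq I) (Pr : pred I) (f : I -> M -> M -> A) u1 u2 u3 :
  islinear P ->
  dT2 P (fun x y => \sum_(i <- r | Pr i) f i x y) u1 u2 u3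
  = \sum_(i <- r | Pr i) dT2 P (f i) u1 u2 u3.
Proof.
move=> P_lin; rewrite /dT2 /lT /rT.
rewrite (lin_sum (mul_linr _)) (lin_sum (ra_linr _)) (lin_sum P_lin).
rewrite (lin_sum (mul_linl _)) (lin_sum (la_linl _)) (lin_sum P_lin).
by rewrite !(sumrB, big_split) /=.
Qed.

Lemma dT2_eq0 P (f : M -> M -> A) u1 u2 u3 :
  islinear P -> (forall x y, f x y = 0) -> dT2 P f u1 u2 u3 = 0.
Proof.
move=> P_lin f0; rewrite /dT2 /lT /rT !f0.
by rewrite (lin0 (mul_linr _)) (lin0 (mul_linl _)) (lin0 (ra_linr _)) (lin0 (la_linl _))
  (lin0 P_lin) !subrr !(addr0, subr0, oppr0).
Qed.

Section Series.
Variable S : nat -> M -> A.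
Hypothesis S_lin : forall i, islinear (S i).

Lemma sum3_dT2_rb_defect n u1 u2 u3 :
  sum3 n (fun a b c => dT2 (S a) (rb_defect (S b) (S c)) u1 u2 u3) = 0.
Proof.
rewrite (eq_sum3 _ (fun a b c => dT2_rb_defect u1 u2 u3 (S_lin a) (S_lin b) (S_lin c))).
by rewrite 2!sum3D sum3_sub_cycle sum3_sub_swap13 sum3_sub_swap12 !addr0.
Qed.

Lemma sum_dT2_obstruction n u1 u2 u3 :
  \sum_(a < n.+1) dT2 (S a) (obstruction S (n - a)) u1 u2 u3 = 0.
Proof.
rewrite -[RHS](sum3_dT2_rb_defect n u1 u2 u3) sum3E; apply: eq_bigr => a _.
exact: dT2_sum.
Qed.

Lemma obstruction_cocycle n :
  (forall k, (k < n)%N -> forall u v, obstruction S k u v = 0) ->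
  forall u1 u2 u3, dT2 (S 0) (obstruction S n) u1 u2 u3 = 0.
Proof.
move=> ob0 u1 u2 u3; rewrite -[RHS](sum_dT2_obstruction n u1 u2 u3) big_ord_recl subn0.
rewrite big1 ?addr0 // => a _; apply: dT2_eq0 => // u v.
by apply: ob0; rewrite lift0; have := ltn_ord a; lia.
Qed.

End Series.

Definition inv_linear (f : M -> A) : Prop :=
  islinear f /\ forall u, f (sM u) = sA (f u).

Lemma rb_defect_linr P Q u :
  islinear P -> islinear Q -> islinear (rb_defect P Q u).
Proof.
move=> P_lin Q_lin; apply: islinear_sub; first exact: islinear_comp (mul_linr _) Q_lin.
apply: islinear_comp P_lin (islinear_add _ (la_linr _)).
exact: islinear_comp (ra_linr u) Q_lin.
Qed.

Lemma rb_defect_linl P Q v :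
  islinear P -> islinear Q -> islinear (rb_defect P Q ^~ v).
Proof.
move=> P_lin Q_lin; apply: islinear_sub; first exact: islinear_comp (mul_linl _) P_lin.
apply: islinear_comp P_lin (islinear_add (ra_linl _) _).
exact: islinear_comp (la_linl v) Q_lin.
Qed.

Lemma sA_rb_defect P Q u v : inv_linear P -> inv_linear Q ->
  sA (rb_defect P Q u v) = mul (Q (sM v)) (P (sM u)) - P (circ Q (sM v) (sM u)).
Proof.
move=> [_ P_inv] [_ Q_inv].
rewrite /rb_defect /circ (linD sA_lin) (linN sA_lin) sA_mul -P_inv -Q_inv -P_inv.
by rewrite (linD sM_lin) sM_la sM_ra -!Q_inv [la _ _ + _]addrC.
Qed.

Lemma obstruction_iHom2 S k :
  (forall i, inv_linear (S i)) -> iHom2 sA sM (obstruction S k).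
Proof.
move=> S_inv; have S_lin i := (S_inv i).1.
split; [|split].
- by move=> u; apply: islinear_sum => i; apply: rb_defect_linr.
- by move=> v; apply: islinear_sum => i; apply: (rb_defect_linl v).
move=> u v; rewrite /obstruction (lin_sum sA_lin).
under eq_bigr do rewrite sA_rb_defect //.
rewrite !sumrB; congr (_ - _).
rewrite (reindex_inj rev_ord_inj); apply: eq_bigr => i _ /=.
by rewrite subSS subKn // -ltnS.
Qed.

Lemma obstructionE S k u v :
  obstruction S k u v = \sum_(i < k.+1) mul (S i u) (S (k - i)%N v)
                        - \sum_(i < k.+1) S i (circ (S (k - i)%N) u v).
Proof. exact: sumrB. Qed.

Lemma is_deformationE T N Ts :
  is_deformation mul sA la ra sM T N Ts <->
  [/\ Ts 0%N = T, forall i, (i <= N)%N -> inv_linear (Ts i)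
    & forall k, (k <= N)%N -> forall u v, obstruction Ts k u v = 0].
Proof.
split=> [[Ts0 [Ts_inv Ts_eq]] | [Ts0 Ts_inv Ts_ob]].
  by split=> // k le_kN u v; rewrite obstructionE Ts_eq // subrr.
do 2!split=> //; move=> k le_kN u v.
by apply/eqP; rewrite -subr_eq0 -obstructionE Ts_ob.
Qed.

Definition extend (Ts : nat -> M -> A) (N : nat) (g : M -> A) (i : nat) : M -> A :=
  if (i <= N)%N then Ts i else g.

Lemma obstruction_extend_le Ts N g k u v : (k <= N)%N ->
  obstruction (extend Ts N g) k u v = obstruction Ts k u v.
Proof.
move=> le_kN; apply: eq_bigr => i _; have lt_i := ltn_ord i.
by rewrite /extend !ifT //; lia.
Qed.

Lemma obstruction_extend_next T Ts N g u v : islinear T -> Ts 0%N = T ->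
  obstruction (extend Ts N g) N.+1 u v
  = obstruction (extend Ts N (fun _ => 0)) N.+1 u v - dT1 T g u v.
Proof.
move=> T_lin Ts0; rewrite /obstruction.
rewrite [in X in X = _]big_ord_recl [in X in _ = X]big_ord_recl.
rewrite [in X in X = _]big_ord_recr [in X in _ = X]big_ord_recr !lift0 /=.
have inner g' :
    \sum_(i < N) rb_defect (extend Ts N g' i.+1) (extend Ts N g' (N.+1 - i.+1)%N) u v
    = \sum_(i < N) rb_defect (Ts i.+1) (Ts (N.+1 - i.+1)%N) u v.
  by apply: eq_bigr => i _; have lt_i := ltn_ord i; rewrite /extend !ifT //; lia.
rewrite !inner subn0 subnn /extend leq0n ltnn /= Ts0.
rewrite /rb_defect /circ /dT1 /lT /rT (lin0 (mul_linr _)) (lin0 (mul_linl _)).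
rewrite (lin0 (ra_linr _)) (lin0 (la_linl _)) addr0 (lin0 T_lin) (linD T_lin).
eq_by_cancel.
Qed.

End RotaBaxter.

Theorem mainTheorem8 (K : fieldType) (A M : lmodType K)
  (mul : A -> A -> A) (sA : A -> A)
  (la : A -> M -> M) (ra : M -> A -> M) (sM : M -> M) (T : M -> A)
  (HA : inv_assoc_algebra mul sA)
  (HM : inv_bimodule mul sA la ra sM)
  (HT : rel_RB mul sA la ra sM T)
  (H2 : iH2_trivial mul sA la ra sM T) :
  forall (N : nat) (Ts : nat -> M -> A),
    is_deformation mul sA la ra sM T N Ts ->
    exists T' : M -> A,
      is_deformation mul sA la ra sM T N.+1
        (fun i => if (i <= N)%N then Ts i else T').
Proof.
move=> N Ts /is_deformationE [Ts0 Ts_inv Ts_ob].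
pose S := extend Ts N (fun _ => 0).
have S_inv i : inv_linear sA sM (S i).
  rewrite /S /extend; case: ifP => [/Ts_inv // | _].
  by split=> [|u]; [exact: islinear0 | rewrite (lin0 (sA_lin HA))].
have S_ob k : (k < N.+1)%N -> forall u v, obstruction mul la ra S k u v = 0.
  by move=> le_kN u v; rewrite obstruction_extend_le // Ts_ob.
have ob_cocycle := obstruction_cocycle HA HM (fun i => (S_inv i).1) S_ob.
have S0 : S 0%N = T by rewrite /S /extend leq0n.
rewrite S0 in ob_cocycle.
have [g [[g_lin g_inv] ob_g]] := H2 _ (obstruction_iHom2 HA HM N.+1 S_inv) ob_cocycle.
exists g; rewrite -/(extend Ts N g); apply/is_deformationE; split=> [|i le_iN1|k le_kN1 u v].
- by rewrite /extend leq0n.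
- rewrite /extend; case: ifP => [le_iN | _]; first exact: Ts_inv.
  by split=> // u; rewrite g_inv.
- move: le_kN1; rewrite leq_eqVlt ltnS => /orP[/eqP -> | le_kN].
    by rewrite (obstruction_extend_next HA HM N g u v HT.1) // ob_g subrr.
  by rewrite obstruction_extend_le ?Ts_ob.
Qed.
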